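(* Let $N\in\mathbb{C}^{m\times n}$ have rank $r$ and singular value decomposition $N=U\begin{pmatrix}\Sigma & 0\\ 0 & 0\end{pmatrix}V^{\ast}$, where $\Sigma\in\mathbb{C}^{r\times r}$ is diagonal with positive diagonal entries and $U\in\mathbb{C}^{m\times m}$, $V\in\mathbb{C}^{n\times n}$ are unitary. Let $X\in\mathbb{C}^{m\times m}$ and $Y\in\mathbb{C}^{n\times n}$ be nonsingular, and let $M_{1}=XN$, $M_{2}=NY$. (1) If $X=U\begin{pmatrix}X_{1} & 0\\ X_{2} & X_{4}\end{pmatrix}U^{\ast}$ for some $X_{1}\in\mathbb{C}^{r\times r}$, $X_{2}\in\mathbb{C}^{(m-r)\times r}$, $X_{4}\in\mathbb{C}^{(m-r)\times(m-r)}$, then $$M_{1}M_{1}^{\dagger}=(I+R)NN^{\dagger}(I+R^{\ast}R)^{-1}(I+R^{\ast}),$$ where $R=XE_{N}X^{-1}(E_{N}-I)$. (2) If $Y=V\begin{pmatrix}Y_{1} & Y_{3}\\ 0 & Y_{4}\end{pmatrix}V^{\ast}$ for some $Y_{1}\in\mathbb{C}^{r\times r}$, $Y_{3}\in\mathbb{C}^{r\times(n-r)}$, $Y_{4}\in\mathbb{C}^{(n-r)\times(n-r)}$, then $$M_{2}^{\dagger}M_{2}=(I+L^{\ast})(I+LL^{\ast})^{-1}N^{\dagger}N(I+L),$$ where $L=(F_{N}-I)Y^{-1}F_{N}Y$.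
   Context: For a complex matrix $A$, $A^{\ast}$ is its conjugate transpose and $A^{\dagger}$ its Moore--Penrose inverse. $E_{A}:=I-AA^{\dagger}$ and $F_{A}:=I-A^{\dagger}A$. $I$ denotes an identity matrix of the appropriate size. *)

From HB Require Import structures.
From mathcomp Require Import all_boot all_order all_algebra.
From mathcomp Require Import sesquilinear spectral.
From Stdlib Require Import ClassicalEpsilon.
Set Implicit Arguments. Unset Strict Implicit. Unset Printing Implicit Defensive.
Import Order.TTheory GRing.Theory Num.Theory.
Local Open Scope ring_scope.
Local Open Scope sesquilinear_scope.

Definition penrose {C : numClosedFieldType} {m n : nat}
  (A : 'M[C]_(m, n)) (G : 'M[C]_(n, m)) : Prop :=
  [/\ A *m G *m A = A, G *m A *m G = G,
      (A *m G) ^t* = A *m G & (G *m A) ^t* = G *m A].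

(* The Moore--Penrose inverse A^dagger: the (unique, existing) matrix
   satisfying the Penrose equations, selected by Hilbert's epsilon. *)
Definition mpinv {C : numClosedFieldType} {m n : nat} (A : 'M[C]_(m, n))
  : 'M[C]_(n, m) := epsilon (inhabits 0) (penrose A).

Definition EA {C : numClosedFieldType} {m n : nat} (A : 'M[C]_(m, n)) : 'M[C]_m :=
  1%:M - A *m mpinv A.
Definition FA {C : numClosedFieldType} {m n : nat} (A : 'M[C]_(m, n)) : 'M[C]_n :=
  1%:M - mpinv A *m A.

(* Write P := N N^+ and E := E_N = I - P.  The block form of X says exactly
   that X maps the range of E into itself, i.e. P X E = 0, and then so does
   X^-1.  Hence R = - X E X^-1 P satisfies R P = R and P R = 0, and
   B := P + R = X P X^-1 is an oblique projector onto the range of M1 = X N.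
   Since B^* B = (I + R^* R) P and P commutes with I + R^* R, the hermitian
   matrix B (I + R^* R)^-1 B^* fixes the range of B and lies inside it: it is
   the orthogonal projector M1 M1^+.  Part (2) is part (1) for N^* and Y^*:
   M2^+ M2 is the projector K K^+ for K = M2^* = Y^* N^*, and E_{N^*} = F_N.
   The Penrose equations for mpinv, which is defined by choice, come from
   the explicit inverse of a full-rank factorisation. *)

From HB Require Import structures.
From mathcomp Require Import all_boot all_order all_algebra.
From mathcomp Require Import sesquilinear spectral.
From Stdlib Require Import ClassicalEpsilon.

Set Implicit Arguments.
Unset Strict Implicit.
Unset Printing Implicit Defensive.
Import Order.TTheory GRing.Theory Num.Theory.
Local Open Scope ring_scope.
Local Open Scope sesquilinear_scope.

Section StableSpaces.
Context {F : fieldType}.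

Lemma stablemx_invmx m n (V : 'M[F]_(m, n)) (X : 'M[F]_n) :
  X \in unitmx -> stablemx V X -> stablemx V (invmx X).
Proof.
move=> Xu VX; have := mxrank_leqif_sup VX.
rewrite mxrankMfree ?row_free_unit // => /leqif_refl VsubVX.
by rewrite -[X in (_ <= X)%MS](mulmxK Xu V) submxMr.
Qed.

Lemma idem_stablemxP n (P X : 'M[F]_n) :
  P *m P = P -> reflect (P *m X *m (1%:M - P) = 0) (stablemx P X).
Proof.
move=> PP; apply: (iffP idP) => [/submxP[D ->] | PXQ0].
  by rewrite -mulmxA mulmxBr mulmx1 PP subrr mulmx0.
have <- : P *m X *m P = P *m X.
  by apply/eqP; rewrite eq_sym -subr_eq0 -{1}(mulmx1 (P *m X)) -mulmxBr PXQ0.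
exact: submxMl.
Qed.

End StableSpaces.

Lemma comm_mx_invmx (R : comUnitRingType) n (Q G : 'M[R]_n) :
  G \in unitmx -> comm_mx Q G -> comm_mx Q (invmx G).
Proof.
rewrite /comm_mx => Gu QG.
by rewrite -[LHS]mul1mx -(mulVmx Gu) -!mulmxA (mulmxA G) -QG !mulmxA mulmxK.
Qed.

Section ConjugateTranspose.
Context {C : numClosedFieldType}.

Lemma trmxC_mul m n p (A : 'M[C]_(m, n)) (B : 'M[C]_(n, p)) :
  (A *m B) ^t* = B ^t* *m A ^t*.
Proof. by rewrite trmx_mul map_mxM. Qed.

Lemma trmxCD m n (A B : 'M[C]_(m, n)) : (A + B) ^t* = A ^t* + B ^t*.
Proof. by rewrite linearD map_mxD. Qed.

Lemma trmxCN m n (A : 'M[C]_(m, n)) : (- A) ^t* = - A ^t*.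
Proof. by rewrite linearN map_mxN. Qed.

Lemma trmxC0 m n : (0 : 'M[C]_(m, n)) ^t* = 0.
Proof. by rewrite trmx0 map_mx0. Qed.

Lemma trmxC1 n : (1%:M : 'M[C]_n) ^t* = 1%:M.
Proof. by rewrite trmx1 map_mx1. Qed.

Lemma trmxC_block m1 m2 n1 n2 (Aul : 'M[C]_(m1, n1)) (Aur : 'M[C]_(m1, n2))
    (Adl : 'M[C]_(m2, n1)) (Adr : 'M[C]_(m2, n2)) :
  (block_mx Aul Aur Adl Adr) ^t* = block_mx (Aul ^t*) (Adl ^t*) (Aur ^t*) (Adr ^t*).
Proof. by rewrite tr_block_mx map_block_mx. Qed.

Lemma trmxC_inv n (A : 'M[C]_n) : invmx (A ^t*) = (invmx A) ^t*.
Proof. by rewrite trmx_inv map_invmx. Qed.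

Lemma unitmx_trmxC n (A : 'M[C]_n) : (A ^t* \in unitmx) = (A \in unitmx).
Proof. by rewrite map_unitmx unitmx_tr. Qed.

Lemma mulmx_trmxC_eq0 n (w : 'rV[C]_n) : (w *m w ^t* == 0) = (w == 0).
Proof.
apply/eqP/eqP=> [ww0|->]; last by rewrite mul0mx.
apply/eqP; apply: contraTT isT => /dotmx_is_dotmx.
by rewrite dotmxE ww0 mxE ltxx.
Qed.

Lemma row_free_mulmx_trmxC_unit m n (G : 'M[C]_(m, n)) :
  row_free G -> G *m G ^t* \in unitmx.
Proof.
move=> Gfree; rewrite -row_free_unit; apply/inj_row_free => v vGG0.
apply/eqP; rewrite -(mulmx_free_eq0 _ Gfree) -mulmx_trmxC_eq0.
by rewrite trmxC_mul mulmxA -(mulmxA v) vGG0 mul0mx.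
Qed.

Lemma unitmx_1_trmxC_mul m n (K : 'M[C]_(m, n)) : 1%:M + K ^t* *m K \in unitmx.
Proof.
have -> : 1%:M + K ^t* *m K = row_mx 1%:M (K ^t*) *m (row_mx 1%:M (K ^t*)) ^t*.
  by rewrite tr_row_mx map_col_mx mul_row_col trmxC1 mulmx1 trmxCK.
apply/row_free_mulmx_trmxC_unit/inj_row_free => v.
by rewrite mul_mx_row mulmx1 -row_mx0 => /eq_row_mx[].
Qed.

End ConjugateTranspose.

Section MoorePenrose.
Context {C : numClosedFieldType}.

Lemma penrose_uniq m n (A : 'M[C]_(m, n)) (G1 G2 : 'M[C]_(n, m)) :
  penrose A G1 -> penrose A G2 -> G1 = G2.
Proof.
move=> [AGA1 GAG1 AG1 GA1] [AGA2 GAG2 AG2 GA2].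
have AG : A *m G1 = A *m G2.
  transitivity ((A *m G2 *m A *m G1) ^t*); first by rewrite AGA2 AG1.
  by rewrite -mulmxA trmxC_mul AG1 AG2 mulmxA AGA1.
have GA : G1 *m A = G2 *m A.
  transitivity ((G1 *m A *m G2 *m A) ^t*).
    by rewrite -!mulmxA (mulmxA A) AGA2 GA1.
  by rewrite -mulmxA trmxC_mul GA1 GA2 -!mulmxA (mulmxA A G1) AGA1.
by rewrite -GAG1 -GAG2 -mulmxA AG mulmxA GA.
Qed.

Lemma penrose_factor m k n (F : 'M[C]_(m, k)) (G : 'M[C]_(k, n)) :
  F ^t* *m F \in unitmx -> G *m G ^t* \in unitmx ->
  penrose (F *m G) (G ^t* *m invmx (G *m G ^t*) *m invmx (F ^t* *m F) *m F ^t*).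
Proof.
move=> Fu Gu; set H := _ *m F ^t*.
have FGH : F *m G *m H = F *m invmx (F ^t* *m F) *m F ^t*.
  by rewrite /H !mulmxA -(mulmxA F) mulmxK.
have HFG : H *m (F *m G) = G ^t* *m invmx (G *m G ^t*) *m G.
  by rewrite /H !mulmxA -(mulmxA _ (F ^t*)) mulmxKV.
split.
- by rewrite FGH !mulmxA -(mulmxA _ (F ^t*)) mulmxKV.
- by rewrite HFG /H !mulmxA -(mulmxA _ G) mulmxKV.
- by rewrite FGH !trmxC_mul trmxCK -trmxC_inv trmxC_mul trmxCK mulmxA.
- by rewrite HFG !trmxC_mul trmxCK -trmxC_inv trmxC_mul trmxCK mulmxA.
Qed.

Lemma penrose_mpinv m n (A : 'M[C]_(m, n)) : penrose A (mpinv A).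
Proof.
rewrite /mpinv; apply: epsilon_spec.
have Ffree : row_free ((col_base A) ^t*).
  by rewrite /row_free mxrank_map mxrank_tr; apply: col_base_full.
have := row_free_mulmx_trmxC_unit Ffree; rewrite trmxCK => Fu.
have Gu := row_free_mulmx_trmxC_unit (row_base_free A).
by move: (penrose_factor Fu Gu); rewrite mulmx_base; exact: ex_intro.
Qed.

Lemma mpinvE m n (A : 'M[C]_(m, n)) G : penrose A G -> mpinv A = G.
Proof. exact/penrose_uniq/penrose_mpinv. Qed.

Lemma mulmx_mpinvK m n (A : 'M[C]_(m, n)) : A *m mpinv A *m A = A.
Proof. by case: (penrose_mpinv A). Qed.

Lemma mulmx_mpinv_adj m n (A : 'M[C]_(m, n)) : (A *m mpinv A) ^t* = A *m mpinv A.
Proof. by case: (penrose_mpinv A). Qed.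

Lemma mpinv_mulmx_adj m n (A : 'M[C]_(m, n)) : (mpinv A *m A) ^t* = mpinv A *m A.
Proof. by case: (penrose_mpinv A). Qed.

Lemma mulmx_mpinv_idem m n (A : 'M[C]_(m, n)) :
  A *m mpinv A *m (A *m mpinv A) = A *m mpinv A.
Proof. by rewrite mulmxA mulmx_mpinvK. Qed.

Lemma mpinv_trmxC m n (A : 'M[C]_(m, n)) : mpinv (A ^t*) = (mpinv A) ^t*.
Proof.
apply: mpinvE; have [AGA GAG AG GA] := penrose_mpinv A.
by split; rewrite -!trmxC_mul ?mulmxA ?AGA ?GAG ?trmxCK ?AG ?GA.
Qed.

Lemma mulmx_mpinv_trmxC m n (A : 'M[C]_(m, n)) :
  A ^t* *m mpinv (A ^t*) = mpinv A *m A.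
Proof. by rewrite mpinv_trmxC -trmxC_mul mpinv_mulmx_adj. Qed.

Lemma mulmx_mpinv_eq m n (M : 'M[C]_(m, n))
    (Q : 'M[C]_m) (Z : 'M[C]_(n, m)) :
  Q ^t* = Q -> Q *m M = M -> Q = M *m Z -> M *m mpinv M = Q.
Proof.
move=> Qh QM defQ.
have MGQ : M *m mpinv M *m Q = Q by rewrite [in LHS]defQ mulmxA mulmx_mpinvK -defQ.
have QMG : Q *m (M *m mpinv M) = M *m mpinv M by rewrite mulmxA QM.
by rewrite -mulmx_mpinv_adj -QMG trmxC_mul Qh mulmx_mpinv_adj MGQ.
Qed.

End MoorePenrose.

Section UnitaryEquivalence.
Context {C : numClosedFieldType}.

Lemma trmxC_unitary_conj m n (U : 'M[C]_m) (A : 'M[C]_(m, n)) (V : 'M[C]_n) :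
  (U *m A *m V ^t*) ^t* = V *m A ^t* *m U ^t*.
Proof. by rewrite !trmxC_mul trmxCK mulmxA. Qed.

Lemma mulmx_unitary_conj m i k j l (U : 'M[C]_(m, i)) (A : 'M[C]_(i, k))
    (V : 'M[C]_k) (B : 'M[C]_(k, j)) (W : 'M[C]_(l, j)) :
  V \is unitarymx -> U *m A *m V ^t* *m (V *m B *m W ^t*) = U *m (A *m B) *m W ^t*.
Proof. by move=> Vu; rewrite !mulmxA mulmxKtV // mulmxA. Qed.

Lemma mpinv_unitary_conj m n (U : 'M[C]_m) (A : 'M[C]_(m, n)) (V : 'M[C]_n) :
  U \is unitarymx -> V \is unitarymx ->
  mpinv (U *m A *m V ^t*) = V *m mpinv A *m U ^t*.
Proof.
move=> Uu Vu; apply: mpinvE; have [AGA GAG AG GA] := penrose_mpinv A.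
by split; rewrite !mulmx_unitary_conj ?trmxC_unitary_conj ?AGA ?GAG ?AG ?GA.
Qed.

Lemma subr_unitary_conj n (U A : 'M[C]_n) :
  U \is unitarymx -> 1%:M - U *m A *m U ^t* = U *m (1%:M - A) *m U ^t*.
Proof. by move=> /unitarymxP UU; rewrite mulmxBr mulmx1 mulmxBl UU. Qed.

Lemma mulmx_ulblock (R : pzRingType) m1 m2 n1 n2 p1 p2
    (A : 'M[R]_(m1, n1)) (B : 'M[R]_(n1, p1)) :
  (block_mx A 0 0 0 : 'M_(m1 + m2, n1 + n2))
    *m (block_mx B 0 0 0 : 'M_(_, p1 + p2))
  = block_mx (A *m B) 0 0 0.
Proof. by rewrite mulmx_block !mulmx0 !mul0mx !addr0. Qed.

Lemma mpinv_ulblock r p q (D : 'M[C]_r) : D \in unitmx ->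
  mpinv (block_mx D 0 0 0 : 'M_(r + p, r + q)) = block_mx (invmx D) 0 0 0.
Proof.
move=> Du; apply: mpinvE.
by split; rewrite !mulmx_ulblock (mulmxV, mulVmx) // ?mul1mx
  ?trmxC_block ?trmxC1 ?trmxC0.
Qed.

End UnitaryEquivalence.

Section InvariantComplement.
Context {C : numClosedFieldType} {m n : nat} (A : 'M[C]_(m, n)) (X R : 'M[C]_m).
Hypotheses (Xu : X \in unitmx) (PXE0 : A *m mpinv A *m X *m EA A = 0).
Hypothesis defR : R = X *m EA A *m invmx X *m (EA A - 1%:M).

Local Notation P := (A *m mpinv A).
Local Notation E := (EA A).
Local Notation B := (P + R).
Local Notation G := (1%:M + R ^t* *m R).

Let PE1 : P + E = 1%:M. Proof. exact: subrKC. Qed.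

Let RE : R = - (X *m E *m invmx X *m P).
Proof. by rewrite defR /EA addrAC subrr add0r mulmxN. Qed.

Let RP : R *m P = R.
Proof. by rewrite RE mulNmx -(mulmxA _ P P) mulmx_mpinv_idem. Qed.

Let PR : P *m R = 0.
Proof. by rewrite RE mulmxN !mulmxA PXE0 !mul0mx oppr0. Qed.

Let PRadj : P *m R ^t* = R ^t*.
Proof. by rewrite -mulmx_mpinv_adj -trmxC_mul RP. Qed.

Let RadjP : R ^t* *m P = 0.
Proof. by rewrite -mulmx_mpinv_adj -trmxC_mul PR trmxC0. Qed.

Let XEiXE : X *m E *m invmx X *m E = E.
Proof.
have PiXE0 : P *m invmx X *m E = 0.
  apply/idem_stablemxP; first exact: mulmx_mpinv_idem.
  by apply/stablemx_invmx/idem_stablemxP => //; apply: mulmx_mpinv_idem.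
have EiXE : E *m invmx X *m E = invmx X *m E.
  by rewrite -[RHS]mul1mx -PE1 (mulmxDl P) !mulmxA PiXE0 add0r.
by rewrite -!mulmxA (mulmxA E) EiXE mulmxA mulmxV // mul1mx.
Qed.

Let BE : B = X *m P *m invmx X.
Proof.
have XPiX : X *m P *m invmx X = 1%:M - X *m E *m invmx X.
  by rewrite /EA mulmxBr mulmx1 mulmxBl mulmxV // subKr.
have XEiXP : X *m E *m invmx X *m P = X *m E *m invmx X - E.
  by rewrite -[P](subKr 1%:M) mulmxBr mulmx1 XEiXE.
by rewrite RE XEiXP XPiX opprB addrA PE1.
Qed.

Let BP : B *m P = B.
Proof. by rewrite mulmxDl mulmx_mpinv_idem RP. Qed.

Let Badj : B ^t* = P + R ^t*.
Proof. by rewrite trmxCD mulmx_mpinv_adj. Qed.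

Let BadjB : B ^t* *m B = G *m P.
Proof.
rewrite Badj mulmxDr !mulmxDl mulmx_mpinv_idem PR RadjP addr0 add0r.
by rewrite mul1mx -mulmxA RP.
Qed.

Let PG : comm_mx P G.
Proof.
by rewrite /comm_mx mulmxDr mulmxDl mulmx1 mul1mx mulmxA PRadj -mulmxA RP.
Qed.

Let Gu : G \in unitmx. Proof. exact: unitmx_1_trmxC_mul. Qed.

Let invG_adj : (invmx G) ^t* = invmx G.
Proof. by rewrite -trmxC_inv trmxCD trmxC1 trmxC_mul trmxCK. Qed.

Let invG_B : B *m invmx G *m B ^t* *m B = B.
Proof. by rewrite -mulmxA BadjB mulmxA mulmxKV // BP. Qed.

Let BXA : B *m (X *m A) = X *m A.
Proof. by rewrite BE -!mulmxA mulKmx // (mulmxA A) mulmx_mpinvK. Qed.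

Lemma mulmx_mpinv_lmul :
  X *m A *m mpinv (X *m A)
  = (1%:M + R) *m A *m mpinv A *m invmx G *m (1%:M + R ^t*).
Proof.
have -> : (1%:M + R) *m A *m mpinv A *m invmx G *m (1%:M + R ^t*)
          = B *m invmx G *m B ^t*.
  have -> : B ^t* = P *m (1%:M + R ^t*) by rewrite Badj mulmxDr mulmx1 PRadj.
  rewrite -(mulmxA _ A) mulmxDl mul1mx RP mulmxA -[in RHS](mulmxA B).
  by rewrite -(comm_mx_invmx Gu PG) mulmxA BP.
apply: (mulmx_mpinv_eq (Z := mpinv A *m invmx X *m invmx G *m B ^t*)).
- by rewrite !trmxC_mul trmxCK invG_adj mulmxA.
- by rewrite -BXA mulmxA invG_B.
- by rewrite BE !mulmxA.
Qed.

End InvariantComplement.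

Lemma mpinv_mulmx_rmul {C : numClosedFieldType} m n (A : 'M[C]_(m, n))
    (Y L : 'M[C]_n) :
  Y \in unitmx -> FA A *m Y *m (mpinv A *m A) = 0 ->
  L = (FA A - 1%:M) *m invmx Y *m FA A *m Y ->
  mpinv (A *m Y) *m (A *m Y)
  = (1%:M + L ^t*) *m invmx (1%:M + L *m L ^t*) *m mpinv A *m A *m (1%:M + L).
Proof.
move=> Yu FYP0 defL.
have EA_adj : EA (A ^t*) = FA A by rewrite /EA mulmx_mpinv_trmxC.
have FA_adj : (FA A) ^t* = FA A by rewrite trmxCD trmxCN trmxC1 mpinv_mulmx_adj.
have Yu' : Y ^t* \in unitmx by rewrite unitmx_trmxC.
have FYP0' : A ^t* *m mpinv (A ^t*) *m Y ^t* *m EA (A ^t*) = 0.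
  rewrite mulmx_mpinv_trmxC EA_adj -[0]trmxC0 -FYP0 (trmxC_mul (FA A *m Y)).
  by rewrite mpinv_mulmx_adj trmxC_mul FA_adj mulmxA.
have defL' : L ^t* = Y ^t* *m EA (A ^t*) *m invmx (Y ^t*) *m (EA (A ^t*) - 1%:M).
  rewrite EA_adj trmxC_inv defL !trmxC_mul FA_adj trmxCD trmxCN trmxC1 FA_adj.
  by rewrite !mulmxA.
rewrite -[LHS]mpinv_mulmx_adj -mulmx_mpinv_trmxC (trmxC_mul A).
rewrite (mulmx_mpinv_lmul Yu' FYP0' defL') -(mulmxA _ (A ^t*)) mulmx_mpinv_trmxC.
rewrite trmxCK (trmxC_mul _ (1%:M + L)) (trmxC_mul _ (invmx _)).
rewrite (trmxC_mul (1%:M + L ^t*)) mpinv_mulmx_adj !trmxCD trmxC1 trmxCK.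
by rewrite -trmxC_inv trmxCD trmxC1 trmxC_mul trmxCK !mulmxA.
Qed.

Theorem corollary3p2 (C : numClosedFieldType) (r p q : nat)
  (N : 'M[C]_(r + p, r + q)) (U : 'M[C]_(r + p)) (V : 'M[C]_(r + q))
  (d : 'rV[C]_r) (X : 'M[C]_(r + p)) (Y : 'M[C]_(r + q)) :
  \rank N = r ->
  (forall i, 0 < d 0 i) ->
  U \is unitarymx -> V \is unitarymx ->
  N = U *m block_mx (diag_mx d) 0 0 0 *m V ^t* ->
  X \in unitmx -> Y \in unitmx ->
  let M1 := X *m N in
  let M2 := N *m Y in
  ((exists (X1 : 'M[C]_r) (X2 : 'M[C]_(p, r)) (X4 : 'M[C]_p),
       X = U *m block_mx X1 0 X2 X4 *m U ^t*) ->
   let R := X *m EA N *m invmx X *m (EA N - 1%:M) in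
   M1 *m mpinv M1
   = (1%:M + R) *m N *m mpinv N *m invmx (1%:M + R ^t* *m R) *m (1%:M + R ^t*))
  /\
  ((exists (Y1 : 'M[C]_r) (Y3 : 'M[C]_(r, q)) (Y4 : 'M[C]_q),
       Y = V *m block_mx Y1 Y3 0 Y4 *m V ^t*) ->
   let L := (FA N - 1%:M) *m invmx Y *m FA N *m Y in
   mpinv M2 *m M2
   = (1%:M + L ^t*) *m invmx (1%:M + L *m L ^t*) *m mpinv N *m N *m (1%:M + L)).
Proof.
move=> _ d_gt0 Uu Vu defN Xu Yu M1 M2.
have Du : diag_mx d \in unitmx.
  by rewrite unitmxE det_diag unitfE; apply/prodf_neq0 => i _; apply: lt0r_neq0.
have Ninv : mpinv N = V *m block_mx (invmx (diag_mx d)) 0 0 0 *m U ^t*.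
  by rewrite defN mpinv_unitary_conj // mpinv_ulblock.
have compl k l :
    1%:M - block_mx 1%:M 0 0 0 = block_mx 0 0 0 1%:M :> 'M[C]_(k + l).
  by rewrite (scalar_mx_block k l) opp_block_mx add_block_mx !subrr !oppr0 !addr0.
have N_Ndag : N *m mpinv N = U *m block_mx 1%:M 0 0 0 *m U ^t*.
  by rewrite Ninv defN mulmx_unitary_conj // mulmx_ulblock mulmxV.
have Ndag_N : mpinv N *m N = V *m block_mx 1%:M 0 0 0 *m V ^t*.
  by rewrite Ninv defN mulmx_unitary_conj // mulmx_ulblock mulVmx.
split=> [[X1 [X2 [X4 defX]]] R | [Y1 [Y3 [Y4 defY]]] L].
  apply: mulmx_mpinv_lmul => //.
  rewrite /EA N_Ndag defX subr_unitary_conj // compl !mulmx_unitary_conj //.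
  rewrite !mulmx_block !(mulmx0, mul0mx, mul1mx, addr0, add0r).
  by rewrite block_mx0 mulmx0 mul0mx.
apply: mpinv_mulmx_rmul => //.
rewrite /FA Ndag_N defY subr_unitary_conj // compl !mulmx_unitary_conj //.
rewrite !mulmx_block !(mulmx0, mul0mx, mul1mx, mulmx1, addr0, add0r).
by rewrite block_mx0 mulmx0 mul0mx.
Qed.
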